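(* Let $\mathcal{A}$ be a $d$-regular, strongly $\chi$-colorable 2-complex with coloring $C$, let $\mathcal{G}=G_1\times\cdots\times G_\chi$ and $F_1,\dots,F_\chi$ as in the construction below, and suppose that $\mathcal{C}=HDZ^{-}[\mathcal{A},C,\mathcal{G},F_1,\dots,F_\chi]$ is a commutative triplet structure. Then $\mathcal{C}$ has $|\mathcal{G}|$ vertices, every vertex of $\mathcal{C}$ lies in exactly $3|\mathcal{A}(2)|$ triangles, and $\mathcal{C}$ is $2d$-regular.
   Context: For a 2-complex $X$, $X(1)$ is the set of 2-sets in triangles, $X(2)$ the set of triangles; $X$ is $d$-regular if each edge of $X(1)$ lies in exactly $d$ triangles. A coloring is strong if every triangle has three differently colored vertices. Construction: let $V^c=\{V^c_1,\dots,V^c_{K_c}\}$ be the vertices of color $c$ ($K_c$ even); $F_c\subseteq G_c$ with $|F_c|=K_c$, ordered $F^c_1,\dots,F^c_{K_c}$ with $(F^c_i)^{-1}=F^c_{i+K_c/2}$ (indices mod $K_c$) and no element of order 2; identify $F^c_i$ with the element of $\mathcal{G}$ equal to $F^c_i$ in coordinate $c$ and identity elsewhere; $\phi(V^c_i)=F^c_i$; $\mathcal{S}$ is the complex with triangles $\{\phi(a),\phi(b),\phi(e)\}$, $\{a,b,e\}\in\mathcal{A}(2)$; $HDZ^{-}[\mathcal{A},C,\mathcal{G},F_1,\dots,F_\chi]=\{\sigma\cdot g:\sigma\in\mathcal{S},g\in\mathcal{G}\}$ where $\sigma\cdot g=\{sg:s\in\sigma\}$. With $\mathcal{T}=\mathcal{S}(1)$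 and $\mathcal{T}_o$ the ordered pairs of elements of $\mathcal{T}$, this is a commutative triplet structure if: (0) $\{s,s^{-1}\}\notin\mathcal{T}$; (A) $\mathcal{S}$ is regular; (B) $ab=ba$ for $\{a,b\}\in\mathcal{T}$; (C) $\{a,b\}\in\mathcal{T}\iff\{a^{-1},b^{-1}\}\in\mathcal{T}$; (D) for $t\ne t'\in\mathcal{T}_o$, $t_1t_2^{-1}=t'_1(t'_2)^{-1}$ implies $t'_2=t_1^{-1}$, $t'_1=t_2^{-1}$; (E) the 1-skeleton of $\mathcal{S}$ is connected. *)

From mathcomp Require Import all_boot all_fingroup.
Set Implicit Arguments. Unset Strict Implicit. Unset Printing Implicit Defensive.
Local Open Scope group_scope.

Section Complex.
Variable T : finType.

Definition is_2complex (X : {set {set T}}) : Prop :=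
  forall t, t \in X -> #|t| = 3.

Definition edges (X : {set {set T}}) : {set {set T}} :=
  [set e : {set T} | (#|e| == 2) && [exists t in X, e \subset t]].

Definition vertices (X : {set {set T}}) : {set T} := \bigcup_(t in X) t.

Definition regular (d : nat) (X : {set {set T}}) : Prop :=
  forall e, e \in edges X -> #|[set t in X | e \subset t]| = d.

Definition adj (X : {set {set T}}) : rel T := fun x y => [set x; y] \in edges X.

(** connected 1-skeleton (a connected graph is nonempty) *)
Definition skel_connected (X : {set {set T}}) : Prop :=
  vertices X != set0 /\
  forall x y, x \in vertices X -> y \in vertices X -> connect (adj X) x y.
End Complex.

Definition strong_coloring (V : finType) (chi : nat) (X : {set {set V}})
  (col : V -> 'I_chi) : Prop :=
  forall t, t \in X -> #|col @: t| = 3.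

Definition prodG (chi : nat) (gT : 'I_chi -> finGroupType) : finType :=
  {dffun forall c : 'I_chi, gT c}.

Definition pmul (chi : nat) (gT : 'I_chi -> finGroupType) (g h : prodG gT) : prodG gT :=
  [ffun c => (g c * h c)%g].

Definition pinv (chi : nat) (gT : 'I_chi -> finGroupType) (g : prodG gT) : prodG gT :=
  [ffun c => (g c)^-1%g].

Definition pembed (chi : nat) (gT : 'I_chi -> finGroupType) (c : 'I_chi) (x : gT c)
  : prodG gT := finfun (dfwith (fun c' => (1 : gT c')%g) x).

Definition rtrans (chi : nat) (gT : 'I_chi -> finGroupType)
  (s : {set prodG gT}) (g : prodG gT) : {set prodG gT} :=
  [set pmul x g | x in s].

Definition HDZ (chi : nat) (gT : 'I_chi -> finGroupType)
  (S : {set {set prodG gT}}) : {set {set prodG gT}} :=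
  [set rtrans s g | s in S, g in [set: prodG gT]].

(** commutative triplet structure, conditions (0),(A)-(E), with T = S(1) *)
Definition comm_triplet (chi : nat) (gT : 'I_chi -> finGroupType)
  (S : {set {set prodG gT}}) : Prop :=
  let T := edges S in
  (forall s, [set s; pinv s] \notin T) /\
      (exists d, regular d S) /\
      (forall a b, [set a; b] \in T -> pmul a b = pmul b a) /\
      (forall a b, ([set a; b] \in T) <-> ([set pinv a; pinv b] \in T)) /\
      (forall t1 t2 u1 u2, [set t1; t2] \in T -> [set u1; u2] \in T ->
          (t1, t2) <> (u1, u2) -> pmul t1 (pinv t2) = pmul u1 (pinv u2) ->
          u2 = pinv t1 /\ u1 = pinv t2) /\
      skel_connected S.

Definition imcomplex (V : finType) (chi : nat) (gT : 'I_chi -> finGroupType)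
  (phi : V -> prodG gT) (A2 : {set {set V}}) : {set {set prodG gT}} :=
  (fun t : {set V} => phi @: t) @: A2.

From HB Require Import structures.
From mathcomp Require Import all_boot all_fingroup zify.
Set Implicit Arguments. Unset Strict Implicit. Unset Printing Implicit Defensive.

(* Let S be the image of A(2) under phi.  Each F^c_i is nontrivial, since its
   inverse F^c_(i+K_c/2) is a different member of an injective family; as the
   embedded F^c_i live in distinct coordinates, phi is injective and S is a copy
   of A.  Condition (D) makes right translation act freely on triangles: if s
   and sk are both triangles of S with k <> 1, then (D) applied to the edges
   {x, y} and {xk, yk} forces xk = y^-1 for all distinct x, y in s, which is
   absurd for three vertices.  So the triangles of C through a vertex h match
   the flags x \in s \in S (via (s, x) |-> s x^-1 h), and those through an edge
   {h1, h2} match the triangles of S through an ordered edge (x, y) with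
   y x^-1 = h2 h1^-1; by (0), (B), (C) and (D) there are exactly two such
   ordered edges, (x, y) and (y^-1, x^-1). *)

Lemma imsetS_inj (aT rT : finType) (f : aT -> rT) (A B : {set aT}) :
  injective f -> (f @: A \subset f @: B) = (A \subset B).
Proof.
move=> inj_f; apply/idP/idP => [/subsetP sAB|]; last exact: imsetS.
by apply/subsetP => x xA; rewrite -(mem_imset _ _ inj_f) sAB ?imset_f.
Qed.

Lemma card_pairs_dep (I J : finType) (A : {set I}) (B : I -> {set J}) :
  #|[set p : I * J | (p.1 \in A) && (p.2 \in B p.1)]| = \sum_(i in A) #|B i|.
Proof.
rewrite -sum1_card; under [RHS]eq_bigr do rewrite -sum1_card.
by rewrite pair_big_dep; apply: eq_bigl => p; rewrite inE.
Qed.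

Lemma mem_edges (T : finType) (X : {set {set T}}) s x y :
  s \in X -> x \in s -> y \in s -> x != y -> [set x; y] \in edges X.
Proof.
move=> sX xs ys xy; rewrite inE cards2 xy; apply/existsP; exists s.
by rewrite sX subUset !sub1set xs ys.
Qed.

Section ImageComplex.
Variables (V W : finType) (phi : V -> W) (X : {set {set V}}).
Hypothesis phi_inj : injective phi.
Local Notation imX := ((fun t : {set V} => phi @: t) @: X).

Lemma card_imcomplex : #|imX| = #|X|.
Proof. exact/card_imset/imset_inj. Qed.

Lemma imcomplex_2complex : is_2complex X -> is_2complex imX.
Proof. by move=> X3 _ /imsetP [t tX ->]; rewrite card_imset // X3. Qed.

Lemma edges_imcomplex e :
  e \in edges imX -> exists2 e0, e0 \in edges X & e = phi @: e0.
Proof.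
rewrite inE => /andP [/cards2P [a [b [ab ->]]] /existsP [_ /andP [/imsetP [t tX ->]]]].
rewrite subUset !sub1set => /andP [/imsetP [x xt ax] /imsetP [y yt b_y]].
subst a b; exists [set x; y]; last by rewrite imsetU1 imset_set1.
by apply: mem_edges tX xt yt _; apply: contraNneq ab => ->.
Qed.

Lemma regular_imcomplex d : regular d X -> regular d imX.
Proof.
move=> regX _ /edges_imcomplex [e0 e0X ->]; rewrite -(regX e0 e0X).
have -> : [set u in imX | phi @: e0 \subset u]
          = (fun t : {set V} => phi @: t) @: [set t in X | e0 \subset t].
  apply/setP => u; rewrite inE; apply/andP/imsetP => [[/imsetP [t tX ->]]|].
    by rewrite imsetS_inj // => e0t; exists t; rewrite // inE tX.
  by case=> t /setIdP [tX e0t] ->; rewrite imset_f // imsetS_inj.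
exact/card_imset/imset_inj.
Qed.

End ImageComplex.

Section Translates.
Variables (gT : finGroupType) (S : {set {set gT}}).
Implicit Types (s : {set gT}) (g h x y : gT).
Local Open Scope group_scope.

Definition translates := [set s :* g | s in S, g in [set: gT]].

Definition quotient_edges r :=
  [set q : gT * gT | ([set q.1; q.2] \in edges S) && (q.2 * q.1^-1 == r)].

Lemma mem_quotient_edges q r :
  (q \in quotient_edges r) = ([set q.1; q.2] \in edges S) && (q.2 * q.1^-1 == r).
Proof. by rewrite inE. Qed.

Hypothesis S_2complex : is_2complex S.
Hypothesis edge_quotient_inj : forall t1 t2 u1 u2,
  [set t1; t2] \in edges S -> [set u1; u2] \in edges S ->
  (t1, t2) <> (u1, u2) -> t1 * t2^-1 = u1 * u2^-1 -> u2 = t1^-1 /\ u1 = t2^-1.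

Lemma rcoset_triangle_eq1 s k : s \in S -> s :* k \in S -> k = 1.
Proof.
move=> sS skS; apply/eqP/negPn/negP => k_neq1.
have mulk_inv x y : x \in s -> y \in s -> x != y -> x * k = y^-1.
  move=> xs ys xy.
  have xks : x * k \in s :* k by rewrite mem_rcoset mulgK.
  have yks : y * k \in s :* k by rewrite mem_rcoset mulgK.
  have xkyk : x * k != y * k by rewrite (inj_eq (mulIg k)).
  have moved : (x, y) <> (x * k, y * k).
    by case=> /eqP; rewrite -{1}[x]mulg1 (inj_eq (mulgI x)) eq_sym (negbTE k_neq1).
  have same_quot : x * y^-1 = (x * k) * (y * k)^-1 by rewrite invMg mulgA mulgK.
  by case: (edge_quotient_inj (mem_edges sS xs ys xy) (mem_edges skS xks yks xkyk)
              moved same_quot).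
have /card_gt2P [a [b [e [[sa sb se] [ab be ea]]]]] : 2 < #|s| by rewrite S_2complex.
move: be; rewrite -(inj_eq invg_inj) -(mulk_inv a b) // -(mulk_inv a e) ?eqxx //.
by rewrite eq_sym.
Qed.

Lemma rcoset_triangle_inj s s' g g' :
  s \in S -> s' \in S -> s :* g = s' :* g' -> s = s' /\ g = g'.
Proof.
move=> sS s'S E.
have s'E : s' = s :* (g * g'^-1) by rewrite rcosetM E rcosetK.
have /eqP : g * g'^-1 = 1 by apply: rcoset_triangle_eq1 sS _; rewrite -s'E.
by rewrite -eq_mulgV1 => /eqP g_g'; rewrite s'E g_g' mulgV rcoset1.
Qed.

Lemma vertices_translates : vertices S != set0 -> vertices translates = [set: gT].
Proof.
case/set0Pn => x /bigcupP [s sS xs]; apply/setP => h; rewrite inE.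
apply/bigcupP; exists (s :* (x^-1 * h)); first by apply: imset2_f; rewrite ?inE.
by rewrite mem_rcoset invMg invgK mulVKg.
Qed.

Lemma card_translates_at h : #|[set t in translates | h \in t]| = (3 * #|S|)%N.
Proof.
pose flags := [set p : {set gT} * gT | (p.1 \in S) && (p.2 \in p.1)].
have -> : [set t in translates | h \in t] = [set p.1 :* (p.2^-1 * h) | p in flags].
  apply/setP => t; rewrite inE; apply/andP/imsetP => [[/imset2P [s g sS _ ->]]|].
    rewrite mem_rcoset => hs; exists (s, h * g^-1); first by rewrite inE sS.
    by rewrite /= invMg invgK mulgVK.
  case=> [[s x]]; rewrite inE /= => /andP [sS xs] ->.
  split; first by apply: imset2_f; rewrite ?inE.
  by rewrite mem_rcoset invMg invgK mulVKg.
rewrite card_in_imset => [|[s x] [s' x']]; last first.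
  rewrite !inE /= => /andP [sS _] /andP [s'S _].
  by case/(rcoset_triangle_inj sS s'S) => -> /mulIg /invg_inj ->.
rewrite (card_pairs_dep S id) (eq_bigr (fun _ => 3%N)) => [|s]; last exact: S_2complex.
by rewrite sum_nat_const mulnC.
Qed.

Lemma card_translates_over_edge h1 h2 : h1 != h2 ->
  #|[set t in translates | [set h1; h2] \subset t]|
    = \sum_(q in quotient_edges (h2 * h1^-1)) #|[set s in S | [set q.1; q.2] \subset s]|.
Proof.
move=> h12; set r := h2 * h1^-1.
pose D := [set p : (gT * gT) * {set gT} | (p.1 \in quotient_edges r)
                   && (p.2 \in [set s in S | [set p.1.1; p.1.2] \subset s])].
have -> : [set t in translates | [set h1; h2] \subset t]
          = [set p.2 :* (p.1.1^-1 * h1) | p in D].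
  apply/setP => t; rewrite inE; apply/andP/imsetP => [[/imset2P [s g sS _ ->]]|].
    rewrite subUset !sub1set !mem_rcoset => /andP [h1s h2s].
    exists ((h1 * g^-1, h2 * g^-1), s); last by rewrite /= invMg invgK mulgVK.
    have e12 : [set h1 * g^-1; h2 * g^-1] \in edges S.
      by apply: mem_edges sS h1s h2s _; rewrite (inj_eq (mulIg _)).
    rewrite inE /= mem_quotient_edges e12 /= invMg invgK mulgA mulgVK eqxx.
    by rewrite !inE sS subUset !sub1set h1s h2s.
  case=> [[[x y] s]]; rewrite !inE /= => /andP [/andP [_ /eqP yx_r] /andP [sS]].
  rewrite subUset !sub1set => /andP [xs ys] ->.
  split; first by apply: imset2_f; rewrite ?inE.
  rewrite subUset !sub1set !mem_rcoset !invMg !invgK mulVKg xs /=.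
  by rewrite mulgA -/r -yx_r mulgVK.
rewrite card_in_imset => [|[[x y] s] [[x' y'] s']]; last first.
  rewrite !inE /= => /andP [/andP [_ /eqP yx_r] /andP [sS _]].
  move=> /andP [/andP [_ /eqP yx_r'] /andP [s'S _]].
  case/(rcoset_triangle_inj sS s'S) => -> /mulIg /invg_inj x_x'.
  by rewrite -(mulgVK x y) yx_r -yx_r' x_x' mulgVK.
exact: card_pairs_dep.
Qed.

Hypothesis no_inverse_edge : forall x, [set x; x^-1] \notin edges S.
Hypothesis edge_commute : forall a b, [set a; b] \in edges S -> a * b = b * a.
Hypothesis edges_inv :
  forall a b, ([set a; b] \in edges S) <-> ([set a^-1; b^-1] \in edges S).

Lemma quotient_edgesE x y : [set x; y] \in edges S ->
  quotient_edges (y * x^-1) = [set (x, y); (y^-1, x^-1)].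
Proof.
move=> exy; have eyx : [set y; x] \in edges S by rewrite setUC.
apply/setP => [[u v]]; rewrite mem_quotient_edges in_set2 /=.
apply/andP/orP => [[euv /eqP vu]|].
  have [[-> ->]|neq] := eqVneq (y, x) (v, u); first by rewrite eqxx; left.
  have evu : [set v; u] \in edges S by rewrite setUC.
  by case: (edge_quotient_inj eyx evu (elimN eqP neq) (esym vu)) => -> ->; right.
case=> /eqP [-> ->]; first by rewrite exy.
rewrite invgK; split; first exact: (proj1 (edges_inv y x)).
by rewrite (commute_sym (commuteV (commute_sym (edge_commute exy)))).
Qed.

Lemma card_quotient_edges x y : [set x; y] \in edges S ->
  #|quotient_edges (y * x^-1)| = 2.
Proof.
move=> exy; rewrite quotient_edgesE // cards2.
by case: eqP => // [[_ yE]]; move: (no_inverse_edge x); rewrite -yE exy.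
Qed.

Lemma regular_translates d : regular d S -> regular (2 * d)%N translates.
Proof.
move=> regS e; rewrite inE => /andP [/cards2P [h1 [h2 [h12 ->]]] /existsP [t]].
case/andP => /imset2P [s g sS _ ->]; rewrite subUset !sub1set !mem_rcoset.
case/andP => xs ys; set x := h1 * g^-1 in xs; set y := h2 * g^-1 in ys.
have exy : [set x; y] \in edges S.
  by apply: mem_edges sS xs ys _; rewrite (inj_eq (mulIg _)).
have quot_xy : h2 * h1^-1 = y * x^-1 by rewrite /x /y invMg invgK mulgA mulgVK.
rewrite card_translates_over_edge // quot_xy (eq_bigr (fun _ => d%N)) => [|q].
  by rewrite sum_nat_const card_quotient_edges // mulnC.
by rewrite inE => /andP [/regS].
Qed.

End Translates.

(* The componentwise group structure on [prodG], under which [rtrans s g] is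
   the right coset [s :* g]. *)
Definition prodGroup (chi : nat) (gT : 'I_chi -> finGroupType) : Type := prodG gT.

HB.instance Definition _ chi (gT : 'I_chi -> finGroupType) :=
  Finite.on (prodGroup gT).

Section ProductGroup.
Variables (chi : nat) (gT : 'I_chi -> finGroupType).
Local Open Scope group_scope.

Lemma pmulA : associative (@pmul chi gT).
Proof. by move=> x y z; apply/ffunP => c; rewrite !ffunE mulgA. Qed.

Lemma pmul1g : left_id [ffun c => 1] (@pmul chi gT).
Proof. by move=> x; apply/ffunP => c; rewrite !ffunE mul1g. Qed.

Lemma pmulVg : left_inverse [ffun c => 1] (@pinv chi gT) (@pmul chi gT).
Proof. by move=> x; apply/ffunP => c; rewrite !ffunE mulVg. Qed.

End ProductGroup.

HB.instance Definition _ chi (gT : 'I_chi -> finGroupType) :=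
  Finite_isGroup.Build (prodGroup gT) (@pmulA chi gT) (@pmul1g chi gT) (@pmulVg chi gT).

Lemma HDZ_translates chi (gT : 'I_chi -> finGroupType) (S : {set {set prodGroup gT}}) :
  HDZ S = translates S.
Proof. by apply: eq_in_imset2 => s g _ _; rewrite -rcosetE. Qed.

Section Embedding.
Variables (chi : nat) (gT : 'I_chi -> finGroupType).
Local Open Scope group_scope.

Lemma pembed_id c (x : gT c) : pembed x c = x.
Proof. by rewrite ffunE dfwith_in. Qed.

Lemma pembed_out c c' (x : gT c) : c != c' -> pembed x c' = 1.
Proof. by move=> cc'; rewrite ffunE dfwith_out. Qed.

Lemma pembed_inj c : injective (@pembed chi gT c).
Proof. by move=> x y /(congr1 (fun g : prodG gT => g c)); rewrite /= !pembed_id. Qed.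

Lemma pembed_eq_coord c c' (x : gT c) (y : gT c') :
  x != 1 -> pembed x = pembed y -> c = c'.
Proof.
move=> x_neq1 /(congr1 (fun g : prodG gT => g c)) /=; rewrite pembed_id.
have [//|c'c] := eqVneq c' c.
by rewrite pembed_out // => x1; rewrite x1 eqxx in x_neq1.
Qed.

End Embedding.

Lemma addn_half_mod_neq K i : ~~ odd K -> i < K -> (i + K./2) %% K != i.
Proof.
move=> evK ltiK; rewrite -[X in _ != X](modn_small ltiK) -[X in _ != X %% _]addn0.
by rewrite eqn_modDl mod0n modn_small; lia.
Qed.

Section Construction.
Variables (V : finType) (chi : nat) (col : V -> 'I_chi) (gT : 'I_chi -> finGroupType).
Variables (K : 'I_chi -> nat) (Vc : forall c, 'I_(K c) -> V) (Fc : forall c, 'I_(K c) -> gT c).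
Variable phi : V -> prodG gT.
Arguments Vc : clear implicits.
Arguments Fc : clear implicits.
Hypothesis K_card : forall c, K c = #|[set v | col v == c]|.
Hypothesis Vc_inj : forall c, injective (Vc c).
Hypothesis Vc_col : forall c i, col (Vc c i) = c.
Hypothesis K_even : forall c, ~~ odd (K c).
Hypothesis Fc_inj : forall c, injective (Fc c).
Hypothesis Fc_inv : forall c (i j : 'I_(K c)),
  nat_of_ord j = (i + (K c)./2) %% K c -> Fc c j = ((Fc c i)^-1)%g.
Hypothesis phi_Vc : forall c i, phi (Vc c i) = pembed (Fc c i).

Lemma Vc_onto v : exists i, Vc (col v) i = v.
Proof.
have im_Vc : Vc (col v) @: setT = [set w | col w == col v].
  apply/eqP; rewrite eqEcard (card_imset _ (@Vc_inj (col v))) cardsT card_ord.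
  rewrite -K_card leqnn andbT; apply/subsetP => _ /imsetP [i _ ->].
  by rewrite inE Vc_col.
have : v \in Vc (col v) @: setT by rewrite im_Vc inE.
by case/imsetP => i _ vE; exists i; rewrite -vE.
Qed.

Lemma Fc_neq1 c i : Fc c i != 1%g.
Proof.
have ltjK : (i + (K c)./2) %% K c < K c.
  by rewrite ltn_pmod // (leq_ltn_trans (leq0n i)).
apply: contraNneq (addn_half_mod_neq (K_even c) (ltn_ord i)) => Fc1.
have /Fc_inj/(congr1 val)/= -> // : Fc c (Ordinal ltjK) = Fc c i.
  by rewrite (@Fc_inv c i (Ordinal ltjK) erefl) Fc1 invg1.
Qed.

Lemma phi_inj : injective phi.
Proof.
move=> u v; have [i <-] := Vc_onto u; have [j <-] := Vc_onto v; rewrite !phi_Vc.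
move: (col u) (col v) i j => cu cv i j E.
have cuv := pembed_eq_coord (Fc_neq1 i) E; subst cv.
by rewrite (Fc_inj (pembed_inj E)).
Qed.

End Construction.

Theorem mainTheorem10
  (V : finType) (A2 : {set {set V}}) (d chi : nat) (col : V -> 'I_chi)
  (gT : 'I_chi -> finGroupType)
  (K : 'I_chi -> nat)
  (Vc : forall c : 'I_chi, 'I_(K c) -> V)
  (Fc : forall c : 'I_chi, 'I_(K c) -> gT c)
  (phi : V -> prodG gT) :
  is_2complex A2 ->
  regular d A2 ->
  strong_coloring A2 col ->
  (* V^c = {V^c_i}: an enumeration of the vertices of color c, K_c even *)
  (forall c, K c = #|[set v | col v == c]|) ->
  (forall c, injective (Vc c)) ->
  (forall c i, col (Vc c i) = c) ->
  (forall c, ~~ odd (K c)) ->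
  (* F_c = {F^c_i} subset of G_c with |F_c| = K_c, (F^c_i)^-1 = F^c_(i+K_c/2) *)
  (forall c, injective (Fc c)) ->
  (forall c (i j : 'I_(K c)), nat_of_ord j = (i + (K c)./2) %% K c ->
      Fc c j = ((Fc c i)^-1)%g) ->
  (forall c i, #[Fc c i]%g != 2) ->
  (* phi(V^c_i) = F^c_i embedded in the product *)
  (forall c i, phi (Vc c i) = pembed (Fc c i)) ->
  comm_triplet (imcomplex phi A2) ->
  let C := HDZ (imcomplex phi A2) in
  [/\ #|vertices C| = #|[set: prodG gT]|,
      (forall h, h \in vertices C -> #|[set t in C | h \in t]| = 3 * #|A2|) &
      regular (2 * d) C].
Proof.
move=> A3 regA _ K_card Vc_inj Vc_col K_even Fc_inj Fc_inv _ phi_Vc.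
case=> no_inv [_ [edge_comm [edges_inv [quot_inj [S_ne _]]]]] C.
have phi_inj := phi_inj K_card Vc_inj Vc_col K_even Fc_inj Fc_inv phi_Vc.
have S3 : is_2complex (imcomplex phi A2) := imcomplex_2complex phi_inj A3.
rewrite /C HDZ_translates; split.
- by rewrite vertices_translates.
- by move=> h _; rewrite card_translates_at // card_imcomplex.
- exact: regular_translates (regular_imcomplex phi_inj regA).
Qed.
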